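(* Let $\Lambda$ be a set and $\mathscr{G}=\hat\Lambda$ its groupoid of pairs. The following data on $\Lambda$ are equivalent (in bijective correspondence): (i) a group operation $*$ on $\Lambda$; (ii) a pointed heap structure on $\Lambda$, i.e. a heap structure together with a distinguished element $u\in\Lambda$; (iii) a pre-braiding $\sigma$ on $\mathscr{G}$ together with a distinguished vertex $u\in\Lambda$. The correspondences are: a group $(\Lambda,* )$ with unit $u$ gives the heap $\langle a,b,c\rangle=a*b^{-1}*c$ pointed at $u$; a pointed heap gives the group $a*b=\langle a,u,b\rangle$; a heap corresponds to the pre-braiding $\sigma([a,b]|[b,c])=[a,\langle a,b,c\rangle]|[\langle a,b,c\rangle,c]$. Under this correspondence, abelian groups correspond to involutive braidings, and thus to ternary operations satisfying $\langle a,\langle a,b,c\rangle,c\rangle=b$ for all $a,b,c$.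
   Context: The groupoid of pairs $\hat\Lambda$ has vertex set $\Lambda$ and one arrow $[a,b]\colon a\to b$ for each $(a,b)$, with $[a,b][b,c]=[a,c]$ and units $[a,a]$. For a groupoid $\mathscr{G}$ with multiplication $m$ and units $\mathbf{1}_\lambda$, a pre-braiding is a source/target-preserving map $\sigma\colon\mathscr{G}\otimes\mathscr{G}\to\mathscr{G}\otimes\mathscr{G}$ on composable pairs, $\sigma(x,y)=(x\rightharpoonup y,x\leftharpoonup y)$, such that for all composable $x|y|z$: $\sigma(x,\mathbf{1}_{\mathfrak{t}(x)})=(\mathbf{1}_{\mathfrak{s}(x)},x)$; $\sigma(\mathbf{1}_{\mathfrak{s}(x)},x)=(x,\mathbf{1}_{\mathfrak{t}(x)})$; $x\rightharpoonup yz=(x\rightharpoonup y)((x\leftharpoonup y)\rightharpoonup z)$, $x\leftharpoonup yz=(x\leftharpoonup y)\leftharpoonup z$; $xy\leftharpoonup z=(x\leftharpoonup(y\rightharpoonup z))(y\leftharpoonup z)$, $xy\rightharpoonup z=x\rightharpoonup(y\rightharpoonup z)$; and $m\circ\sigma=m$. A braiding is a bijective pre-braiding; involutive means $\sigma^2=\mathrm{id}$. A heap is a set with a ternary operation satisfying $\langle a,b,b\rangle=a$, $\langle a,a,b\rangle=b$, $\langle a,b,\langle c,d,e\rangle\rangle=\langle\langle a,b,c\rangle,d,e\rangle$. *)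

From mathcomp Require Import ssreflect ssrfun ssrbool.

Set Implicit Arguments.
Unset Strict Implicit.

Section Defs.
Variable L : Type.

(* A group structure on L: multiplication, unit, inverse (unit and inverse
   are uniquely determined by the multiplication). *)
Definition is_group (mul : L -> L -> L) (e : L) (inv : L -> L) : Prop :=
  (forall a b c, mul a (mul b c) = mul (mul a b) c) /\
  (forall a, mul e a = a) /\ (forall a, mul a e = a) /\
  (forall a, mul (inv a) a = e) /\ (forall a, mul a (inv a) = e).

Definition is_abelian (mul : L -> L -> L) : Prop := forall a b, mul a b = mul b a.

Definition is_heap (h : L -> L -> L -> L) : Prop :=
  (forall a b, h a b b = a) /\
  (forall a b, h a a b = b) /\
  (forall a b c d e, h a b (h c d e) = h (h a b c) d e).

Definition arrow := (L * L)%type.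
Definition src (x : arrow) : L := x.1.
Definition tgt (x : arrow) : L := x.2.
Definition idA (a : L) : arrow := (a, a).
(* composition [a,b][b,c] = [a,c], meaningful when tgt x = src y *)
Definition compA (x y : arrow) : arrow := (x.1, y.2).

(* A composable pair [a,b]|[b,c] of hat(L) is encoded by the triple (a,b,c);
   this is exactly the set  hat(L) (x) hat(L)  of composable pairs. *)
Definition cpair := (L * L * L)%type.
Definition fstA (p : cpair) : arrow := (p.1.1, p.1.2).
Definition sndA (p : cpair) : arrow := (p.1.2, p.2).
(* the composable pair x|y (assuming tgt x = src y) *)
Definition mkP (x y : arrow) : cpair := (x.1, x.2, y.2).

Definition lact (s : cpair -> cpair) (x y : arrow) : arrow := fstA (s (mkP x y)).
Definition ract (s : cpair -> cpair) (x y : arrow) : arrow := sndA (s (mkP x y)).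

(* pre-braiding on hat(L) : sigma(x,y) = (x -> y, x <- y) *)
Definition is_prebraiding (s : cpair -> cpair) : Prop :=
  (forall p, src (fstA (s p)) = src (fstA p) /\ tgt (sndA (s p)) = tgt (sndA p)) /\
  (forall x, s (mkP x (idA (tgt x))) = mkP (idA (src x)) x) /\
  (forall x, s (mkP (idA (src x)) x) = mkP x (idA (tgt x))) /\
  (forall x y z, tgt x = src y -> tgt y = src z ->
     lact s x (compA y z) = compA (lact s x y) (lact s (ract s x y) z) /\
     ract s x (compA y z) = ract s (ract s x y) z) /\
  (forall x y z, tgt x = src y -> tgt y = src z ->
     ract s (compA x y) z = compA (ract s x (lact s y z)) (ract s y z) /\
     lact s (compA x y) z = lact s x (lact s y z)) /\
  (forall p, compA (fstA (s p)) (sndA (s p)) = compA (fstA p) (sndA p)).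

Definition is_braiding (s : cpair -> cpair) : Prop :=
  is_prebraiding s /\ bijective s.

Definition is_involutive (s : cpair -> cpair) : Prop := forall p, s (s p) = p.

Definition heap_of_group (mul : L -> L -> L) (inv : L -> L) : L -> L -> L -> L :=
  fun a b c => mul (mul a (inv b)) c.

Definition group_of_heap (h : L -> L -> L -> L) (u : L)
  : (L -> L -> L) * L * (L -> L) :=
  (fun a b => h a u b, u, fun a => h u a u).

Definition braiding_of_heap (h : L -> L -> L -> L) : cpair -> cpair :=
  fun p => (p.1.1, h p.1.1 p.1.2 p.2, p.2).

Definition heap_of_braiding (s : cpair -> cpair) : L -> L -> L -> L :=
  fun a b c => (s (a, b, c)).1.2.

End Defs.

(* A heap is a group with its unit forgotten: the heap axioms are exactly what
   makes [a * b = <a,u,b>] a group with unit [u], and [<a,b,c> = a b^-1 c]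
   recovers the heap from any of these groups.  A pre-braiding on the groupoid
   of pairs preserves sources and targets, so [sigma([a,b]|[b,c])] is
   determined by its middle vertex [<a,b,c>]; its two unit axioms become
   [<a,b,b> = a] and [<a,a,b> = b], and either compatibility condition with
   composition becomes heap associativity.  Involutivity of [sigma] reads
   [<a,<a,b,c>,c> = b], which for [<a,b,c> = a b^-1 c] and [c = 1] is
   [a b a^-1 = b], i.e. commutativity. *)
From mathcomp Require Import ssreflect ssrfun ssrbool.
From Stdlib Require Import FunctionalExtensionality.

Set Implicit Arguments.
Unset Strict Implicit.
Unset Printing Implicit Defensive.

Section GroupToHeap.
Variables (L : Type) (mul : L -> L -> L) (e : L) (inv : L -> L).
Hypothesis mul_group : is_group mul e inv.

Lemma mulgA : associative mul.
Proof. by case: mul_group. Qed.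

Lemma mul1g : left_id e mul.
Proof. by case: mul_group => _ []. Qed.

Lemma mulg1 : right_id e mul.
Proof. by case: mul_group => _ [_ []]. Qed.

Lemma mulVg : left_inverse e inv mul.
Proof. by case: mul_group => _ [_ [_ []]]. Qed.

Lemma mulgV : right_inverse e inv mul.
Proof. by case: mul_group => _ [_ [_ []]]. Qed.

Lemma invg_unique x y : mul x y = e -> inv x = y.
Proof. by move=> xy1; rewrite -[inv x]mulg1 -xy1 mulgA mulVg mul1g. Qed.

Lemma invgM x y : inv (mul x y) = mul (inv y) (inv x).
Proof.
by apply: invg_unique; rewrite -mulgA (mulgA y) mulgV mul1g mulgV.
Qed.

Lemma invgK : involutive inv.
Proof. by move=> x; apply: invg_unique; rewrite mulVg. Qed.

Lemma invg1 : inv e = e.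
Proof. by apply: invg_unique; rewrite mul1g. Qed.

Lemma heap_of_group_is_heap : is_heap (heap_of_group mul inv).
Proof.
rewrite /heap_of_group; split; [|split].
- by move=> a b; rewrite -mulgA mulVg mulg1.
- by move=> a b; rewrite mulgV mul1g.
- by move=> a b c d f; rewrite !mulgA.
Qed.

Lemma group_of_heap_of_group :
  group_of_heap (heap_of_group mul inv) e = (mul, e, inv).
Proof.
rewrite /group_of_heap /heap_of_group invg1; congr (_, _, _).
- by do 2!apply: functional_extensionality => ?; rewrite mulg1.
- by apply: functional_extensionality => a; rewrite mul1g mulg1.
Qed.

Lemma abelian_heap_of_groupE :
  is_abelian mul <->
  (forall a b c, heap_of_group mul inv a (heap_of_group mul inv a b c) c = b).
Proof.
rewrite /heap_of_group; split=> [mulC a b c | heap_sym a b].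
- rewrite !invgM invgK (mulC a) -!mulgA (mulgA (inv a)) mulVg mul1g.
  by rewrite (mulC b) mulgA mulVg mul1g.
- have := heap_sym a b e; rewrite !mulg1 invgM invgK => conj_ab.
  by rewrite -[in RHS]conj_ab -!mulgA mulVg mulg1.
Qed.

End GroupToHeap.

Section HeapToGroupAndBraiding.
Variables (L : Type) (h : L -> L -> L -> L).
Hypothesis h_heap : is_heap h.

Lemma heap_cancel_r a b : h a b b = a.
Proof. by case: h_heap. Qed.

Lemma heap_cancel_l a b : h a a b = b.
Proof. by case: h_heap => _ []. Qed.

Lemma heap_assoc a b c d f : h a b (h c d f) = h (h a b c) d f.
Proof. by case: h_heap => _ []. Qed.

Lemma group_of_heap_is_group u :
  is_group (fun a b => h a u b) u (fun a => h u a u).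
Proof.
split; [|split; [|split; [|split]]] => *.
- exact: heap_assoc.
- exact: heap_cancel_l.
- exact: heap_cancel_r.
- by rewrite -heap_assoc heap_cancel_l heap_cancel_r.
- by rewrite heap_assoc heap_cancel_r heap_cancel_l.
Qed.

Lemma heap_of_group_of_heap u :
  heap_of_group (group_of_heap h u).1.1 (group_of_heap h u).2 = h.
Proof.
do 3!apply: functional_extensionality => ?.
by rewrite /heap_of_group /= heap_assoc heap_cancel_r -heap_assoc heap_cancel_l.
Qed.

Lemma braiding_of_heap_is_prebraiding : is_prebraiding (braiding_of_heap h).
Proof.
rewrite /is_prebraiding /lact /ract /braiding_of_heap /mkP /fstA /sndA /compA.
split; [done|split; [|split; [|split; [|split]]]].
- by case=> a b /=; rewrite heap_cancel_r.
- by case=> a b /=; rewrite heap_cancel_l.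
- by move=> [a b] [b1 c] [c1 d] /= -> ->; rewrite -heap_assoc heap_cancel_l.
- by move=> [a b] [b1 c] [c1 d] /= -> ->; rewrite heap_assoc heap_cancel_r.
- done.
Qed.

End HeapToGroupAndBraiding.

Section BraidingToHeap.
Variables (L : Type) (s : cpair L -> cpair L).
Hypothesis s_prebraiding : is_prebraiding s.

Lemma prebraidingE a b c : s (a, b, c) = (a, heap_of_braiding s a b c, c).
Proof.
case: s_prebraiding => /(_ (a, b, c)); rewrite /heap_of_braiding.
by case: (s (a, b, c)) => [[x y] z] /= [-> ->].
Qed.

Lemma braiding_of_heap_of_braiding : braiding_of_heap (heap_of_braiding s) = s.
Proof.
by apply: functional_extensionality => [[[a b] c]]; rewrite prebraidingE.
Qed.

Lemma heap_of_braiding_is_heap : is_heap (heap_of_braiding s).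
Proof.
have [_ [unit_r [unit_l [comp_r [comp_l _]]]]] := s_prebraiding.
split; [|split].
- by move=> a b; have := unit_r (a, b); rewrite /heap_of_braiding /= => ->.
- by move=> a b; have := unit_l (a, b); rewrite /heap_of_braiding /= => ->.
- move=> a b c d f.
  have [+ _] := comp_r (a, b) (b, c) (c, heap_of_braiding s c d f) erefl erefl.
  have [_ +] := comp_l (heap_of_braiding s a b c, c) (c, d) (d, f) erefl erefl.
  by rewrite /lact /ract /= !prebraidingE /= => [[->]] [->].
Qed.

End BraidingToHeap.

Lemma involutive_prebraiding_is_braiding (L : Type) (s : cpair L -> cpair L) :
  is_prebraiding s -> is_involutive s -> is_braiding s.
Proof. by move=> s_pre s_inv; split=> //; exists s. Qed.

Lemma involutive_braiding_of_heapE (L : Type) (h : L -> L -> L -> L) :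
  is_involutive (braiding_of_heap h) <-> (forall a b c, h a (h a b c) c = b).
Proof.
rewrite /is_involutive /braiding_of_heap; split=> [invol a b c | heap_sym].
- by case: (invol (a, b, c)).
- by case=> [[a b] c] /=; rewrite heap_sym.
Qed.

Lemma involutive_braiding_of_heapP (L : Type) (h : L -> L -> L -> L) :
  is_heap h ->
  (is_braiding (braiding_of_heap h) /\ is_involutive (braiding_of_heap h)) <->
  (forall a b c, h a (h a b c) c = b).
Proof.
move=> h_heap; split=> [[_ /involutive_braiding_of_heapE] // | heap_sym].
have invol : is_involutive (braiding_of_heap h) by apply/involutive_braiding_of_heapE.
split=> //; apply: involutive_prebraiding_is_braiding invol.
exact: braiding_of_heap_is_prebraiding.
Qed.

Theorem corollary7p14 (L : Type) :
  (* (i) -> (ii): a group gives a heap, and the round trip returns the group *)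
  (forall (mul : L -> L -> L) (e : L) (inv : L -> L),
     is_group mul e inv ->
     is_heap (heap_of_group mul inv) /\
     group_of_heap (heap_of_group mul inv) e = (mul, e, inv)) /\
  (* (ii) -> (i): a pointed heap gives a group, and the round trip returns the heap *)
  (forall (h : L -> L -> L -> L) (u : L),
     is_heap h ->
     is_group (group_of_heap h u).1.1 (group_of_heap h u).1.2 (group_of_heap h u).2 /\
     heap_of_group (group_of_heap h u).1.1 (group_of_heap h u).2 = h) /\
  (* (ii) -> (iii): a heap gives a pre-braiding on hat(L), round trip is identity *)
  (forall h : L -> L -> L -> L,
     is_heap h ->
     is_prebraiding (braiding_of_heap h) /\
     heap_of_braiding (braiding_of_heap h) = h) /\
  (* (iii) -> (ii): a pre-braiding gives a heap, round trip is identity *)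
  (forall s : cpair L -> cpair L,
     is_prebraiding s ->
     is_heap (heap_of_braiding s) /\
     braiding_of_heap (heap_of_braiding s) = s) /\
  (* abelian groups <-> involutive braidings *)
  (forall (mul : L -> L -> L) (e : L) (inv : L -> L),
     is_group mul e inv ->
     (is_abelian mul <->
      (is_braiding (braiding_of_heap (heap_of_group mul inv)) /\
       is_involutive (braiding_of_heap (heap_of_group mul inv))))) /\
  (* involutive braidings <-> ternary operations with <a,<a,b,c>,c> = b *)
  (forall h : L -> L -> L -> L,
     is_heap h ->
     ((is_braiding (braiding_of_heap h) /\ is_involutive (braiding_of_heap h)) <->
      (forall a b c, h a (h a b c) c = b))).
Proof.
split; [|split; [|split; [|split; [|split]]]].
- move=> mul e inv G.
  by split; [apply: heap_of_group_is_heap G | apply: group_of_heap_of_group G].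
- move=> h u h_heap.
  by split; [apply: group_of_heap_is_group | apply: heap_of_group_of_heap].
- by move=> h h_heap; split; [apply: braiding_of_heap_is_prebraiding |].
- move=> s s_pre.
  by split; [apply: heap_of_braiding_is_heap | apply: braiding_of_heap_of_braiding].
- move=> mul e inv G.
  apply: iff_trans (abelian_heap_of_groupE G) (iff_sym _).
  exact/involutive_braiding_of_heapP/heap_of_group_is_heap/G.
- exact: involutive_braiding_of_heapP.
Qed.
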